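(* Let $S$ be any set and $s,s':I_m\to S$. If $s$ and $s'$ are mirrored, then $(s,s')$ is a special pair.
   Context: $\mathscr{T}_m=\{\sigma\in\mathcal{S}_m \mid \exists t:\ \sigma(1)>\cdots>\sigma(t)=1,\ \sigma(t)<\cdots<\sigma(m)\}$, $\mathcal{S}_m$ acting on sequences $s:I_m\to S$ by $\sigma s=s\circ\sigma^{-1}$. $(\mathrm{rev}\,s)(i)=s(m+1-i)$. Two sequences $s,s'$ are mirrored if for every $\sigma\in\mathscr{T}_m$ there is $\sigma'\in\mathscr{T}_m$ with $\sigma s=\sigma's'$, and for every $\tau'\in\mathscr{T}_m$ there is $\tau\in\mathscr{T}_m$ with $\tau's'=\tau s$. An element $A\in\mathrm{Im}\,s$ is direct for $(s,s')$ if $s'(i)=A$ for all $i\in s^{-1}(A)$, and reverse for $(s,s')$ if $(\mathrm{rev}\,s')(i)=A$ for all $i\in s^{-1}(A)$. The pair $(s,s')$ is special if every $A\in\mathrm{Im}\,s$ is direct or reverse for $(s,s')$. *)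

(* I_m = {1..m} is rendered as 'I_m = {0..m-1} (shift by 1). *)
From mathcomp Require Import all_boot all_fingroup.
Set Implicit Arguments. Unset Strict Implicit. Unset Printing Implicit Defensive.
Local Open Scope group_scope.

Definition Tperm (m : nat) (sigma : 'S_m) : Prop :=
  exists t : 'I_m,
    (nat_of_ord (sigma t) = 0)%N /\
    (forall i j : 'I_m, (i < j)%N -> (j <= t)%N -> (sigma j < sigma i)%N) /\
    (forall i j : 'I_m, (t <= i)%N -> (i < j)%N -> (sigma i < sigma j)%N).

Definition pact (S : Type) (m : nat) (sigma : 'S_m) (s : 'I_m -> S) : 'I_m -> S :=
  fun i => s (sigma^-1 i).

Definition rev_seq (S : Type) (m : nat) (s : 'I_m -> S) : 'I_m -> S :=
  fun i => s (rev_ord i).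

Definition mirrored (S : Type) (m : nat) (s s' : 'I_m -> S) : Prop :=
  (forall sigma : 'S_m, Tperm sigma ->
     exists sigma' : 'S_m, Tperm sigma' /\ pact sigma s = pact sigma' s') /\
  (forall tau' : 'S_m, Tperm tau' ->
     exists tau : 'S_m, Tperm tau /\ pact tau' s' = pact tau s).

Definition in_image (S : Type) (m : nat) (s : 'I_m -> S) (A : S) : Prop :=
  exists i : 'I_m, s i = A.

Definition direct (S : Type) (m : nat) (s s' : 'I_m -> S) (A : S) : Prop :=
  forall i : 'I_m, s i = A -> s' i = A.

Definition reverse (S : Type) (m : nat) (s s' : 'I_m -> S) (A : S) : Prop :=
  forall i : 'I_m, s i = A -> rev_seq s' i = A.

Definition special (S : Type) (m : nat) (s s' : 'I_m -> S) : Prop :=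
  forall A : S, in_image s A -> direct s s' A \/ reverse s s' A.

From mathcomp Require Import all_boot all_fingroup zify.
From Stdlib Require Import ClassicalEpsilon.
Set Implicit Arguments. Unset Strict Implicit. Unset Printing Implicit Defensive.

(* Reading a sequence through a permutation of [T_m] starts at the position [t]
   where the permutation vanishes and extends the interval read so far by one
   neighbour at a time; backwards, this is a way of emptying the sequence by
   popping letters from either end ([pops]).  Hence mirrored sequences have the
   same pop sequences, and so do the binary words marking the occurrences of any
   value [A].  For a binary word [a^i z a^j] whose core [z] starts and ends with
   [~~ a], the pop sequences determine [i + j], [minn i j] and the pop sequences of
   [z]; by induction [z] is known up to reversal, and when [i != j] an unreversed
   and a reversed core can only coexist if [z] is a palindrome.  So a binary word is
   determined by its pop sequences up to reversal: [A] is direct or reverse. *)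

Inductive pops {T : Type} : seq T -> seq T -> Prop :=
| PopsNil : pops [::] [::]
| PopsFront a u q : pops u q -> pops (a :: u) (a :: q)
| PopsBack a u q : pops u q -> pops (rcons u a) (a :: q).

Lemma pops_consE (T : Type) (u : seq T) d q : pops u (d :: q) ->
  (exists2 u', u = d :: u' & pops u' q) \/ (exists2 u', u = rcons u' d & pops u' q).
Proof. by move=> H; inversion H; subst; [left|right]; exists u0. Qed.

Section PopsMap.
Variables T T' : Type.
Implicit Types (a d : T) (u q : seq T).

Lemma pops_map (f : T -> T') u q : pops u q -> pops (map f u) (map f q).
Proof. by elim=> [|a {}u {}q _ IH|a {}u {}q _ IH]; rewrite /= ?map_rcons; constructor. Qed.

Lemma pops_mapE (f : T -> T') u (q : seq T') :
  pops (map f u) q -> exists2 p, pops u p & q = map f p.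
Proof.
elim: q u => [|d q IH] u.
  by case: u => [|b u] H; [exists [::]; constructor | inversion H].
move=> Hp; case: (pops_consE Hp) => {Hp} [[u' Eu Hu']|[u' Eu Hu']].
  case: u Eu => // b u [Ed Eu]; rewrite -Eu in Hu'; rewrite -Ed.
  by have [p Hp ->] := IH _ Hu'; exists (b :: p) => //; constructor.
case/lastP: u Eu => [|u b]; first by move=> /(congr1 size); rewrite size_rcons.
rewrite map_rcons => /rcons_inj [Eu Ed]; rewrite -Eu in Hu'; rewrite -Ed.
by have [p Hp ->] := IH _ Hu'; exists (b :: p) => //; constructor.
Qed.

End PopsMap.

Section Pops.
Variable T : eqType.
Implicit Types (a c d : T) (u q : seq T).

Lemma pops_perm u q : pops u q -> perm_eq u q.
Proof.
elim=> // a {}u {}q _ IH; first by rewrite perm_cons.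
by rewrite perm_rcons perm_cons.
Qed.

Lemma pops_refl u : pops u u.
Proof. by elim: u => [|a u IH]; constructor. Qed.

Lemma pops_rev u : pops u (rev u).
Proof. by elim/last_ind: u => [|u a IH]; rewrite ?rev_rcons; constructor. Qed.

Lemma pops_revl u q : pops u q -> pops (rev u) q.
Proof.
by elim=> [|a {}u {}q _ IH|a {}u {}q _ IH]; rewrite ?rev_cons ?rev_rcons; constructor.
Qed.

Lemma pops_revE u q : pops (rev u) q <-> pops u q.
Proof. by split=> /pops_revl; rewrite ?revK. Qed.

Lemma pops_nseq n a q : pops (nseq n a) q -> q = nseq n a.
Proof.
move=> /pops_perm Hperm; have := perm_size Hperm; rewrite size_nseq => ->.
apply/all_pred1P/allP => x; rewrite -(perm_mem Hperm).
by rewrite mem_nseq => /andP[].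
Qed.

Lemma pops_pivot_subseq u1 u2 c q : uniq (u1 ++ c :: u2) ->
  pops (u1 ++ c :: u2) (rcons q c) -> subseq u1 q /\ subseq (rev u2) q.
Proof.
elim: q u1 u2 => [|d q IH] u1 u2 Hu Hpops.
  move/pops_perm/perm_size/eqP: Hpops; rewrite size_cat /= addnS eqSS addn_eq0 !size_eq0.
  by case/andP=> /eqP-> /eqP->.
have Hperm := pops_perm Hpops.
have dc : d != c.
  by move: (perm_uniq Hperm); rewrite Hu /= mem_rcons in_cons negb_or => /esym/andP[/andP[]].
have du : d \in u1 ++ u2.
  by move: (perm_mem Hperm d); rewrite mem_cat /= !in_cons eqxx (negPf dc) /= mem_cat.
clear Hperm.
wlog du1 : u1 u2 Hu Hpops du / d \in u1.
  move=> wlog_u1; have := du; rewrite mem_cat => /orP[du1|du2]; first exact: wlog_u1.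
  rewrite -[u1]revK and_comm.
  rewrite -pops_revE rev_pivot in Hpops; rewrite -rev_uniq rev_pivot in Hu.
  by apply: wlog_u1 => //; rewrite ?mem_cat mem_rev du2.
have du2 : d \notin c :: u2.
  by move: Hu; rewrite cat_uniq => /and3P[_ /hasPn cu2 _]; apply: contraL du1 => /cu2.
rewrite rcons_cons in Hpops.
case: (pops_consE Hpops) => {Hpops} [[u' Eu Hpops]|[u' Eu _]].
  case: u1 {du} Eu du1 Hu => [|b u1 [Eb Eu]] //.
  rewrite -Eb -Eu in Hpops * => _ /andP[_ Hu].
  have [s1 s2] := IH u1 u2 Hu Hpops.
  split; last exact: subseq_trans s2 (subseq_cons q b).
  by rewrite [subseq _ _]/= eqxx.
have := congr1 (last c) Eu; rewrite last_cat /= last_rcons => Ed.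
by move: (mem_last c u2); rewrite Ed (negPf du2).
Qed.

Lemma subseq_pops_pivot u1 u2 c q : uniq (u1 ++ c :: u2) -> perm_eq (u1 ++ u2) q ->
  subseq u1 q -> subseq (rev u2) q -> pops (u1 ++ c :: u2) (rcons q c).
Proof.
elim: q u1 u2 => [|d q IH] u1 u2 Hu Hperm.
  move: (perm_size Hperm); rewrite size_cat => /eqP; rewrite addn_eq0 !size_eq0.
  by case/andP=> /eqP-> /eqP-> _ _; do 2!constructor.
have uu : uniq (u1 ++ u2).
  by apply: subseq_uniq Hu; rewrite cat_subseq ?subseq_refl ?subseq_cons.
have /andP[dq uq] : uniq (d :: q) by rewrite -(perm_uniq Hperm).
have du : d \in u1 ++ u2 by rewrite (perm_mem Hperm) mem_head.
wlog du1 : u1 u2 Hu Hperm uu du / d \in u1.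
  move=> wlog_u1; have := du; rewrite mem_cat => /orP[du1|du2]; first exact: wlog_u1.
  move=> s1 s2; rewrite -pops_revE rev_pivot; rewrite -rev_uniq rev_pivot in Hu.
  apply: wlog_u1 => //; rewrite ?revK ?mem_cat ?mem_rev ?du2 //.
  - by rewrite -rev_cat perm_rev.
  - by rewrite -rev_cat rev_uniq.
have du2 : d \notin rev u2.
  by rewrite mem_rev; move: uu; rewrite cat_uniq => /and3P[_ /hasPn du2 _]; apply: contraL du1 => /du2.
case: u1 Hu Hperm du1 {uu du} => // x u1 Hu Hperm du1 s1 s2.
have xd : x = d.
  apply/eqP/negPn/negP => xd; move/negP: dq; apply.
  by move: s1; rewrite [subseq _ _]/= (negPf xd) => /mem_subseq; apply.
rewrite {}xd in Hu Hperm s1 *; rewrite rcons_cons; constructor; apply: IH.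
- by move: Hu; rewrite cat_cons cons_uniq => /andP[].
- by rewrite -(perm_cons d).
- by move: s1; rewrite [subseq _ _]/= eqxx.
- move: s2 du2; case: (rev u2) => [|y r] s2; first by rewrite sub0seq.
  rewrite in_cons negb_or => /andP[dy _].
  by move: s2; rewrite [subseq _ _]/= eq_sym (negPf dy).
Qed.

End Pops.

Section SortedSubseq.
Variable T : eqType.
Variables (lt r : rel T).
Hypotheses (lt_trans : transitive lt) (lt_irr : irreflexive lt).
Hypotheses (r_trans : transitive r) (r_irr : irreflexive r).

Lemma sorted_ltE s : sorted lt s ->
  sorted r s <-> {in s &, forall x y, lt x y -> r x y}.
Proof.
move=> lt_s; split=> [r_s x y xs ys ltxy|lt_r]; last first.
  by apply: (sub_in_sorted (P := mem s)) lt_s; [apply: lt_r | apply/allP].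
apply: (sorted_ltn_index r_trans r_s) => //.
case: ltngtP => // [/(sorted_ltn_index lt_trans lt_s y x ys xs) ltyx|].
  by move: (lt_trans ltxy ltyx); rewrite lt_irr.
by move/(index_inj x xs ys) => Exy; move: ltxy; rewrite Exy lt_irr.
Qed.

Lemma subseq_sortedE s w : sorted r w -> {subset s <= w} -> subseq s w = sorted r s.
Proof.
move=> r_w sw; apply/idP/idP => [s_w|r_s]; first exact: (subseq_sorted r_trans s_w r_w).
suff -> : s = filter (mem s) w by apply: filter_subseq.
apply: (irr_sorted_eq r_trans r_irr r_s (sorted_filter r_trans _ r_w)) => x.
by rewrite mem_filter; apply/esym/andb_idr/sw.
Qed.

End SortedSubseq.

Section Ordinals.
Variable m : nat.
Implicit Types (t i : 'I_m).

Lemma sorted_enum_ord : sorted (fun i j : 'I_m => i < j) (enum 'I_m).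
Proof. by have := iota_ltn_sorted 0 m; rewrite -val_enum_ord sorted_map. Qed.

Lemma enum_ord_pivot t : enum 'I_m = take t (enum 'I_m) ++ t :: drop t.+1 (enum 'I_m).
Proof.
rewrite -[in LHS](cat_take_drop t (enum 'I_m)); congr (_ ++ _).
by rewrite -{1}(index_enum_ord t) drop_index ?mem_enum ?index_enum_ord.
Qed.

Lemma mem_take_enum_ord t i : (i \in take t (enum 'I_m)) = (i < t).
Proof. by rewrite in_take ?mem_enum ?index_enum_ord. Qed.

Lemma mem_drop_enum_ord t i : (i \in drop t.+1 (enum 'I_m)) = (t < i).
Proof.
set s := enum 'I_m.
have : uniq (take t.+1 s ++ drop t.+1 s) by rewrite cat_take_drop enum_uniq.
rewrite cat_uniq => /and3P[_ /hasPn disj _]; case: (ltnP t i) => [ti|it].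
  have : i \in take t.+1 s ++ drop t.+1 s by rewrite cat_take_drop mem_enum.
  by rewrite mem_cat in_take ?mem_enum // index_enum_ord ltnS leqNgt ti.
apply/negbTE/negP => /disj/negP; apply.
by rewrite in_take ?mem_enum // index_enum_ord ltnS.
Qed.

Lemma nth_codom_ord (S : Type) (x : 'I_m -> S) y0 i : nth y0 (codom x) i = x i.
Proof. by rewrite codomE (nth_map i) ?size_enum_ord // nth_ord_enum. Qed.

Lemma codom_ord_inj (S : Type) (x y : 'I_m -> S) : codom x = codom y -> x =1 y.
Proof.
move=> Exy i; have := congr1 (nth (x i)) Exy => /(congr1 (fun f => f (nat_of_ord i))).
by rewrite !nth_codom_ord.
Qed.

Lemma codom_rev_ord (S : Type) (x : 'I_m -> S) :
  codom (fun i => x (rev_ord i)) = rev (codom x).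
Proof.
case: (posnP m) => [m0|m_gt0].
  have codom0 (y : 'I_m -> S) : codom y = [::].
    by apply: size0nil; rewrite size_codom card_ord.
  by rewrite !codom0.
apply: (@eq_from_nth _ (x (Ordinal m_gt0))) => [|k]; rewrite ?size_rev !size_codom //.
rewrite card_ord => Hk; rewrite (nth_codom_ord _ _ (Ordinal Hk)).
by rewrite nth_rev ?size_codom ?card_ord // (nth_codom_ord _ _ (rev_ord (Ordinal Hk))).
Qed.

End Ordinals.

Definition value_order m (sigma : 'S_m) : seq 'I_m := [seq (sigma^-1)%g k | k <- enum 'I_m].

Section ValueOrder.
Variables (m : nat) (sigma : 'S_m).

Lemma codom_pact (S : Type) (x : 'I_m -> S) : codom (pact sigma x) = map x (value_order sigma).
Proof. by rewrite /value_order -map_comp codomE. Qed.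

Lemma perm_value_order : perm_eq (value_order sigma) (enum 'I_m).
Proof.
apply: uniq_perm; last move=> i.
- by rewrite map_inj_uniq ?enum_uniq //; apply: perm_inj.
- exact: enum_uniq.
by rewrite mem_enum; apply/mapP; exists (sigma i); rewrite ?mem_enum ?permK.
Qed.

Lemma sorted_value_order : sorted [rel i j | sigma i < sigma j] (value_order sigma).
Proof.
have E : (fun i j : 'I_m => i < j) =2 relpre (sigma^-1)%g [rel i j | sigma i < sigma j].
  by move=> i j /=; rewrite !permKV.
by rewrite sorted_map -(eq_sorted E) sorted_enum_ord.
Qed.

End ValueOrder.

Lemma value_order_onto n (p : seq 'I_n.+1) :
  perm_eq p (enum 'I_n.+1) -> exists sigma : 'S_n.+1, value_order sigma = p.
Proof.
move=> Hp; have size_p : size p = n.+1 by rewrite (perm_size Hp) size_enum_ord.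
have nth_inj : injective (fun k : 'I_n.+1 => nth ord0 p k).
  move=> k1 k2 /eqP; rewrite nth_uniq ?size_p // ?(perm_uniq Hp) ?enum_uniq //.
  by move/eqP/val_inj.
exists (perm nth_inj)^-1%g; rewrite /value_order invgK.
rewrite (eq_map (permE nth_inj)) -[RHS](mkseq_nth ord0) size_p /mkseq -val_enum_ord.
by rewrite -map_comp.
Qed.

Section Tperm.
Variables (n : nat) (sigma : 'S_n.+1).
Let t := (sigma^-1)%g ord0.
Let s := enum 'I_n.+1.
Let ltv := [rel i j : 'I_n.+1 | sigma i < sigma j].
Let gtv := [rel i j : 'I_n.+1 | sigma j < sigma i].

Let lt_trans : transitive (fun i j : 'I_n.+1 => i < j).
Proof. by move=> ? ? ?; apply: ltn_trans. Qed.
Let ltv_trans : transitive ltv. Proof. by move=> ? ? ?; apply: ltn_trans. Qed.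
Let ltv_irr : irreflexive ltv. Proof. by move=> ?; apply: ltnn. Qed.
Let gtv_trans : transitive gtv. Proof. by move=> ? ? ? H1 H2; apply: ltn_trans H2 H1. Qed.

Let sigma_t : sigma t = ord0. Proof. by rewrite permKV. Qed.

Let sigma_gt0 i : i != t -> 0 < sigma i.
Proof.
apply: contraNT; rewrite lt0n negbK => /eqP s0; apply/eqP.
by apply: (@perm_inj _ sigma); rewrite permKV; apply: val_inj.
Qed.

Lemma TpermE : Tperm sigma <-> sorted gtv (take t s) /\ sorted ltv (drop t.+1 s).
Proof.
rewrite (sorted_ltE lt_trans ltnn gtv_trans (take_sorted _ (sorted_enum_ord _))).
rewrite (sorted_ltE lt_trans ltnn ltv_trans (drop_sorted _ (sorted_enum_ord _))).
split=> [[t' [st' [dec inc]]]|[dec inc]].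
  have Et : t' = t by apply: (@perm_inj _ sigma); rewrite sigma_t; apply: val_inj.
  rewrite {}Et in dec inc.
  split=> i j; rewrite ?mem_take_enum_ord ?mem_drop_enum_ord => it jt ij.
    exact: dec ij (ltnW jt).
  exact: inc (ltnW it) ij.
exists t; split; first by rewrite sigma_t.
split=> i j => [ij jt|ti ij].
  have it : i != t by rewrite neq_ltn (leq_trans ij jt).
  case: (eqVneq j t) => [->|jt']; first by rewrite sigma_t sigma_gt0.
  by apply: dec; rewrite ?mem_take_enum_ord ?(leq_trans ij jt) // ltn_neqAle jt' jt.
have jt : j != t by rewrite neq_ltn (leq_ltn_trans ti ij) orbT.
case: (eqVneq i t) => [->|it]; first by rewrite sigma_t sigma_gt0.
by apply: inc; rewrite ?mem_drop_enum_ord ?(leq_ltn_trans ti ij) // ltn_neqAle eq_sym it ti.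
Qed.

Lemma pops_value_orderE :
  pops s (rev (value_order sigma)) <-> sorted gtv (take t s) /\ sorted ltv (drop t.+1 s).
Proof.
set u1 := take t s; set u2 := drop t.+1 s.
have [w Ew] : exists w, value_order sigma = t :: w by rewrite /value_order enum_ordSl; eexists.
have w_sorted : sorted ltv w by have := sorted_value_order sigma; rewrite Ew => /path_sorted.
have s_pivot : s = u1 ++ t :: u2 := enum_ord_pivot t.
have u_uniq : uniq (u1 ++ t :: u2) by rewrite -s_pivot enum_uniq.
have u_perm : perm_eq (u1 ++ u2) (rev w).
  have := perm_value_order sigma; rewrite Ew -/s s_pivot perm_sym -cat1s perm_catCA.
  by rewrite perm_cons => H; rewrite perm_sym perm_rev perm_sym.
have sub_w : {subset u1 ++ u2 <= w} by move=> x; rewrite (perm_mem u_perm) mem_rev.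
have E1 : subseq u1 (rev w) = sorted gtv u1.
  rewrite -subseq_rev revK (subseq_sortedE ltv_trans ltv_irr w_sorted) ?rev_sorted //.
  by move=> x; rewrite mem_rev => xu1; apply: sub_w; rewrite mem_cat xu1.
have E2 : subseq (rev u2) (rev w) = sorted ltv u2.
  rewrite subseq_rev (subseq_sortedE ltv_trans ltv_irr w_sorted) //.
  by move=> x xu2; apply: sub_w; rewrite mem_cat xu2 orbT.
rewrite Ew rev_cons s_pivot -E1 -E2.
by split=> [/(pops_pivot_subseq u_uniq)|[]]; last exact: subseq_pops_pivot.
Qed.

End Tperm.

Lemma Tperm_pops n (sigma : 'S_n.+1) :
  Tperm sigma <-> pops (enum 'I_n.+1) (rev (value_order sigma)).
Proof. exact: iff_trans (TpermE sigma) (iff_sym (pops_value_orderE sigma)). Qed.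

Lemma pops_codomE (S : Type) n (x : 'I_n.+1 -> S) q :
  pops (codom x) q <-> exists2 sigma : 'S_n.+1, Tperm sigma & q = rev (codom (pact sigma x)).
Proof.
rewrite codomE; split=> [/pops_mapE[p Hp ->]|[sigma /Tperm_pops Hs ->]].
  have [|sigma Es] := @value_order_onto n (rev p).
    by rewrite perm_rev perm_sym; apply: pops_perm Hp.
  exists sigma; first by apply/Tperm_pops; rewrite Es revK.
  by rewrite codom_pact Es map_rev revK.
by rewrite codom_pact -map_rev; apply: pops_map.
Qed.

Definition pad (T : Type) (a : T) (p : nat) (z : seq T) (r : nat) : seq T :=
  nseq p a ++ z ++ nseq r a.

Lemma nseqSr (T : Type) n (x : T) : nseq n.+1 x = rcons (nseq n x) x.
Proof. by rewrite -cats1 -(nseqD n 1) addn1. Qed.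

Section Padding.
Variable T : eqType.
Variables (a b c : T) (z1 z2 : seq T).
Hypotheses (ba : b != a) (ca : c != a) (Ez : b :: z1 = rcons z2 c).
Let z := b :: z1.
Let neq_ab : a = b -> False. Proof. by move=> E; move: ba; rewrite E eqxx. Qed.
Let neq_ac : a = c -> False. Proof. by move=> E; move: ca; rewrite E eqxx. Qed.

Lemma pops_pad_consE p r d q : pops (pad a p z r) (d :: q) ->
  [\/ exists2 p', p = p'.+1 & d = a /\ pops (pad a p' z r) q,
      exists2 r', r = r'.+1 & d = a /\ pops (pad a p z r') q,
      [/\ p = 0, d = b & pops (z1 ++ nseq r a) q]
    | [/\ r = 0, d = c & pops (nseq p a ++ z2) q]].
Proof.
move=> H; case: (pops_consE H) => {H} [[u' Eu Hu]|[u' Eu Hu]].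
  case: p Eu Hu => [[<- <-]|p [<- <-]]; first by constructor 3.
  by constructor 1; exists p.
case: r Eu Hu => [|r].
  rewrite /pad cats0 /z Ez -rcons_cat => /rcons_inj[<- <-].
  by constructor 4.
rewrite /pad nseqSr -!rcons_cat => /rcons_inj[<- <-].
by constructor 2; exists r.
Qed.

Lemma pops_pad p r q : pops (pad a p z r) (nseq (p + r) a ++ q) <-> pops z q.
Proof.
split.
  suff H : forall n p r, p + r = n -> pops (pad a p z r) (nseq n a ++ q) -> pops z q.
    exact: H.
  elim=> [|n IH] {}p {}r Epr.
    by move: Epr => /eqP; rewrite addn_eq0 => /andP[/eqP-> /eqP->]; rewrite /pad cats0.
  case/pops_pad_consE=> [[p' Ep [_ H]]|[r' Er [_ H]]|[_ /neq_ab []]|[_ /neq_ac []]].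
    by apply: (IH p' r) => //; move: Epr; rewrite Ep addSn => -[].
  by apply: (IH p r') => //; move: Epr; rewrite Er addnS => -[].
move=> Hz; elim: p => [|p IH]; last by rewrite addSn; constructor.
rewrite add0n; elim: r => [|r IH]; first by rewrite /pad cats0.
by rewrite /pad [in X in pops X _]nseqSr -!rcons_cat; constructor.
Qed.

Lemma pops_pad_long p r q : ~ pops (pad a p z r) (nseq (p + r).+1 a ++ q).
Proof.
rewrite nseqSr cat_rcons pops_pad => H; case: (pops_consE H) => -[u' Eu _].
  by move: Eu ba => [->]; rewrite eqxx.
by move: Eu ca; rewrite /z Ez => /rcons_inj[_ ->]; rewrite eqxx.
Qed.

Lemma pops_pad_min p r k d q : d != a ->
  pops (pad a p z r) (nseq k a ++ d :: q) -> minn p r <= k.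
Proof.
move=> da; elim: k p r => [|k IH] p r.
  case/pops_pad_consE=> [[_ _ [Ed _]]|[_ _ [Ed _]]|[-> _ _]|[-> _ _]];
    rewrite ?min0n ?minn0 //; by rewrite Ed eqxx in da.
case/pops_pad_consE=> [[p' -> [_ /IH]]|[r' -> [_ /IH]]|[_ /neq_ab []]|[_ /neq_ac []]];
  rewrite ?minSn ?minnS; lia.
Qed.

Lemma pops_pad_peel i j q : i < j ->
  pops (pad a i z j) (nseq i a ++ b :: q) -> pops (z1 ++ nseq j a) q.
Proof.
elim: i j => [|i IH] j ij.
  case/pops_pad_consE=> [[_ _ [/esym/neq_ab []]]|[_ _ [/esym/neq_ab []]]|[_ _ //]|[Ej]].
  by rewrite Ej in ij.
case/pops_pad_consE=> [[_ [<-] [_ H]]|[r' Ej [_ /pops_pad_min]]|[_ /neq_ab []]|[_ /neq_ac []]].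
  exact: IH (ltnW ij) H.
by move=> /(_ ba); move: ij; rewrite Ej; lia.
Qed.

Lemma pops_pad_unpeel i j q :
  pops (z1 ++ nseq j a) q -> pops (pad a i z j) (nseq i a ++ b :: q).
Proof. by move=> H; elim: i => [|i IH]; constructor. Qed.

End Padding.

(* A word [y] with [y ++ a^j = a^j ++ belast b y] is periodic with period [j.+1]
   and first letter [b], hence determined by its size. *)
Lemma shift_nseq_uniq (T : eqType) (a b : T) j (y y' : seq T) : size y = size y' ->
  y ++ nseq j a = nseq j a ++ belast b y -> y' ++ nseq j a = nseq j a ++ belast b y' ->
  y = y'.
Proof.
have shift w k : w ++ nseq j a = nseq j a ++ belast b w -> k < size w ->
    nth a w k = if k < j then a else nth a (b :: w) (k - j).
  move=> Ew kw; have /= := congr1 (nth a ^~ k) Ew; rewrite nth_cat kw => ->.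
  rewrite nth_cat size_nseq nth_nseq if_same; case: ifP => // kj.
  by rewrite [b :: w]lastI -cats1 nth_cat size_belast ifT //; lia.
move=> Es E E'; apply: (@eq_from_nth _ a) => // k; elim/ltn_ind: k => k IH ky.
rewrite (shift y) // (shift y') -?Es //; case: ifP => // kj.
have : k - j <= k := leq_subr j k.
case: (k - j) => [//|k'] k'k /=; apply: IH; lia.
Qed.

Definition pops_equiv (T : Type) (u v : seq T) := forall q, pops u q <-> pops v q.

Section BoolPad.
Variable a : bool.
Local Notation b := (~~ a).
Let ba : b != a. Proof. by case: a. Qed.

Lemma pad_decomp u : exists i j z,
  u = pad a i z j /\ (z = [::] \/ exists z1 z2, z = b :: z1 /\ z = rcons z2 b).
Proof.
elim: u => [|x u [i [j [z [-> Hz]]]]]; first by exists 0, 0, [::]; split; [|left].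
case: (eqVneq x a) => [->|xa]; first by exists i.+1, j, z.
have -> : x = b by move: xa; case: x; case: (a).
case: Hz => [->|[z1 [z2 [Ez1 Ez2]]]].
  by exists 0, (i + j), [:: b]; split; [rewrite /pad /= nseqD | right; exists [::], [::]].
exists 0, j, (b :: nseq i a ++ z); split; first by rewrite /pad /= catA.
right.
by exists (nseq i a ++ z), (b :: nseq i a ++ z2); rewrite Ez2 rcons_cons rcons_cat.
Qed.

Lemma pops_equiv_pad_sum p r p' r' z1 z2 z1' z2' :
  b :: z1 = rcons z2 b -> b :: z1' = rcons z2' b ->
  pops_equiv (pad a p (b :: z1) r) (pad a p' (b :: z1') r') -> p + r = p' + r'.
Proof.
suff le : forall p r p' r' z1 z2 z1' z2', b :: z1 = rcons z2 b -> b :: z1' = rcons z2' b ->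
    pops_equiv (pad a p (b :: z1) r) (pad a p' (b :: z1') r') -> p + r <= p' + r'.
  move=> Ez Ez' E; apply/eqP; rewrite eqn_leq (le _ _ _ _ _ _ _ _ Ez Ez' E).
  by rewrite (le _ _ _ _ _ _ _ _ Ez' Ez (fun q => iff_sym (E q))).
move=> {}p {}r {}p' {}r' {}z1 {}z2 {}z1' {}z2' Ez Ez' E; rewrite leqNgt; apply/negP => lt.
have : pops (pad a p (b :: z1) r) (nseq (p + r) a ++ b :: z1).
  by apply/(pops_pad ba ba Ez); apply: pops_refl.
by move/E; rewrite -(subnKC lt) nseqD -catA; apply: (pops_pad_long ba ba Ez').
Qed.

Lemma pops_equiv_pad_min p r p' r' z1 z2 z1' z2' :
  b :: z1 = rcons z2 b -> b :: z1' = rcons z2' b ->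
  pops_equiv (pad a p (b :: z1) r) (pad a p' (b :: z1') r') -> minn p r = minn p' r'.
Proof.
suff le : forall p r p' r' z1 z2 z1' z2', b :: z1 = rcons z2 b -> b :: z1' = rcons z2' b ->
    pops_equiv (pad a p (b :: z1) r) (pad a p' (b :: z1') r') -> minn p' r' <= minn p r.
  move=> Ez Ez' E; apply/eqP; rewrite eqn_leq (le _ _ _ _ _ _ _ _ Ez Ez' E).
  by rewrite (le _ _ _ _ _ _ _ _ Ez' Ez (fun q => iff_sym (E q))).
move=> {}p {}r {}p' {}r' {}z1 {}z2 {}z1' {}z2' Ez Ez' E; rewrite leq_min.
have /E /(pops_pad_min ba ba Ez' ba) -> /= := pops_refl (pad a p (b :: z1) r).
have /E := pops_rev (pad a p (b :: z1) r).
by rewrite /pad !rev_cat !rev_nseq Ez rev_rcons -catA; apply: (pops_pad_min ba ba Ez' ba).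
Qed.

End BoolPad.

Lemma rev_pad (T : Type) (a : T) p z r : rev (pad a p z r) = pad a r (rev z) p.
Proof. by rewrite /pad !rev_cat !rev_nseq catA. Qed.

Lemma rev_pops_equiv (T : eqType) (u v : seq T) :
  pops_equiv u v -> pops_equiv (rev u) (rev v).
Proof. by move=> E q; rewrite !pops_revE. Qed.

Lemma pops_equiv_nil (T : eqType) (v : seq T) : pops_equiv [::] v -> v = [::].
Proof. by move=> /(_ v) [_ /(_ (pops_refl v)) /pops_perm /perm_size /esym /size0nil]. Qed.

Section Induction.
Variable n : nat.
Hypothesis IHn : forall u v : seq bool, size u <= n -> pops_equiv u v -> v = u \/ v = rev u.

(* Popping [a^i] and then the leading [~~ a] of the core, which is forced when
   [i < j], leaves the rest of both words to be compared by induction. *)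
Lemma pad_palindrome_lt a i j z1 z2 : i < j -> ~~ a :: z1 = rcons z2 (~~ a) ->
  size z1 + j <= n ->
  pops_equiv (pad a i (~~ a :: z1) j) (pad a i (rev (~~ a :: z1)) j) -> rev z2 = z1.
Proof.
set b := ~~ a; have ba : b != a by rewrite /b; case: (a).
move=> ij Ez Hs E.
have Ez_rev : b :: rev z2 = rcons (rev z1) b by rewrite -rev_rcons -Ez rev_cons.
have E1 : pops_equiv (z1 ++ nseq j a) (rev z2 ++ nseq j a).
  have Erev : rev (b :: z1) = b :: rev z2 by rewrite Ez rev_rcons.
  move=> q; rewrite Erev in E.
  split=> /(pops_pad_unpeel b i) /E; first exact: (pops_pad_peel ba ba Ez_rev ij).
  exact: (pops_pad_peel ba ba Ez ij).
have size_z : size (rev z2) = size z1.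
  by move: (congr1 size Ez); rewrite size_rcons size_rev => -[].
have size_w : size (z1 ++ nseq j a) <= n by rewrite size_cat size_nseq.
case: (IHn size_w E1) => [E2|].
  by move/eqP: E2; rewrite eqseq_cat // => /andP[/eqP].
rewrite rev_cat rev_nseq => E2.
apply: (shift_nseq_uniq (a := a) (b := b) (j := j)) size_z _ _.
  by move: Ez_rev; rewrite lastI => /rcons_inj[->].
have := congr1 rev E2; rewrite !rev_cat rev_nseq !revK => <-.
by move: Ez; rewrite lastI => /rcons_inj[->].
Qed.

Lemma pad_palindrome a i j z1 z2 : i != j -> ~~ a :: z1 = rcons z2 (~~ a) ->
  i + size z1 + j <= n ->
  pops_equiv (pad a i (~~ a :: z1) j) (pad a i (rev (~~ a :: z1)) j) ->
  rev (~~ a :: z1) = ~~ a :: z1.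
Proof.
move=> ij Ez Hs E; have Erev : rev (~~ a :: z1) = ~~ a :: rev z2 by rewrite Ez rev_rcons.
rewrite Erev; congr (_ :: _).
case: ltngtP ij => // [lt|gt] _; first by apply: (pad_palindrome_lt lt Ez _ E); lia.
have Ez_rev : ~~ a :: rev z2 = rcons (rev z1) (~~ a) by rewrite -rev_rcons -Ez rev_cons.
have size_z : size z2 = size z1 by move: (congr1 size Ez); rewrite size_rcons => -[].
have := rev_pops_equiv E; rewrite !rev_pad revK Erev Ez -[rcons z2 _]revK rev_rcons => E'.
by have := pad_palindrome_lt gt Ez_rev _ E'; rewrite revK size_rev size_z => <- //; lia.
Qed.

Lemma pops_equiv_pad_rev a i j i' j' z1 z2 z1' z2' :
  ~~ a :: z1 = rcons z2 (~~ a) -> ~~ a :: z1' = rcons z2' (~~ a) ->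
  0 < i -> i + size z1 + j <= n ->
  pops_equiv (pad a i (~~ a :: z1) j) (pad a i' (~~ a :: z1') j') ->
  let u := pad a i (~~ a :: z1) j in let v := pad a i' (~~ a :: z1') j' in
  v = u \/ v = rev u.
Proof.
move=> Ez Ez' i_gt0 Hs E; have ba : ~~ a != a by case: (a).
have Hsum := pops_equiv_pad_sum Ez Ez' E; have Hmin := pops_equiv_pad_min Ez Ez' E.
have Ezz : pops_equiv (~~ a :: z1) (~~ a :: z1').
  move=> q; split.
    by move=> /(pops_pad ba ba Ez i j) /E; rewrite Hsum => /(pops_pad ba ba Ez').
  by move=> /(pops_pad ba ba Ez' i' j') /E; rewrite -Hsum => /(pops_pad ba ba Ez).
have Hsz : size (~~ a :: z1) <= n by rewrite /=; lia.
have [[? ?]|[? ?]] : i' = i /\ j' = j \/ i' = j /\ j' = i by lia.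
  subst i' j'; move: E; case: (IHn Hsz Ezz) => -> E; first by left.
  case: (eqVneq i j) => [-> | ij]; first by right; rewrite /= rev_pad.
  by left; rewrite (pad_palindrome ij Ez _ E) //; lia.
subst i' j'; move: E; case: (IHn Hsz Ezz) => -> E; last by right; rewrite /= rev_pad.
case: (eqVneq i j) => [-> | ij]; first by left.
have E' : pops_equiv (pad a i (~~ a :: z1) j) (pad a i (rev (~~ a :: z1)) j).
  by move=> q; rewrite -[pad a i (rev _) j]revK rev_pad revK pops_revE; apply: E.
by right; rewrite /= rev_pad (pad_palindrome ij Ez _ E') //; lia.
Qed.

Lemma pops_equiv_revS (u v : seq bool) : size u <= n.+1 -> pops_equiv u v -> v = u \/ v = rev u.
Proof.
case: u => [|a u0] Hs E; first by left; apply: pops_equiv_nil.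
have Huv : pops (a :: u0) v by apply/E; apply: pops_refl.
have Hvu : pops v (a :: u0) by apply/E; apply: pops_refl.
have [i [j [z [Eu [z0|[z1 [z2 [Ez1 Ez2]]]]]]]] := pad_decomp a (a :: u0).
  by left; move: Huv; rewrite Eu z0 /pad /= -nseqD => /pops_nseq.
have Ez : ~~ a :: z1 = rcons z2 (~~ a) by rewrite -Ez1 -Ez2.
have [i' [j' [z' [Ev [z0'|[z1' [z2' [Ez1' Ez2']]]]]]]] := pad_decomp a v.
  have : ~~ a \in a :: u0 by rewrite Eu Ez1 /pad !mem_cat mem_head orbT.
  move: Hvu; rewrite Ev z0' /pad /= -nseqD => /pops_nseq ->.
  by rewrite mem_nseq; case: (a); rewrite andbF.
have i_gt0 : 0 < i.
  by case: i Eu => //; rewrite Ez1 /pad /= => -[Ea _]; move: Ea; case: (a).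
have Ez' : ~~ a :: z1' = rcons z2' (~~ a) by rewrite -Ez1' -Ez2'.
rewrite Ez1 in Eu; rewrite Ez1' in Ev.
have Hsize : i + size z1 + j <= n.
  by move: Hs; rewrite Eu /pad !size_cat !size_nseq /=; lia.
by rewrite Eu Ev in E *; apply: pops_equiv_pad_rev Ez Ez' i_gt0 Hsize E.
Qed.

End Induction.

Theorem pops_equiv_rev (u v : seq bool) : pops_equiv u v -> v = u \/ v = rev u.
Proof.
have [n] := ubnPleq (size u); elim: n u v => [|n IHn] u v.
  by case: u => // _ E; left; apply: pops_equiv_nil.
exact: pops_equiv_revS.
Qed.

Lemma mirrored_sym (S : Type) m (s s' : 'I_m -> S) : mirrored s s' -> mirrored s' s.
Proof. by rewrite /mirrored; case=> M M'; split. Qed.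

Lemma pops_mirrored (S T : Type) n (f : S -> T) (s s' : 'I_n.+1 -> S) :
  mirrored s s' -> pops_equiv (codom (f \o s)) (codom (f \o s')).
Proof.
suff sub : forall s s' : 'I_n.+1 -> S, mirrored s s' ->
    forall q, pops (codom (f \o s)) q -> pops (codom (f \o s')) q.
  by move=> M q; split; apply: sub; last apply: mirrored_sym.
move=> {}s {}s' [M _] q /pops_codomE[sigma Ts ->].
have [sigma' [Ts' E]] := M sigma Ts.
by apply/pops_codomE; exists sigma' => //; rewrite -[pact sigma _]/(f \o pact sigma s) E.
Qed.

Theorem mainTheorem18 (S : Type) (m : nat) (s s' : 'I_m -> S) :
  mirrored s s' -> special s s'.
Proof.
move=> Hmir A [i0 _]; case: m s s' Hmir i0 => [|n] s s' Hmir; first by case.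
pose f x : bool := if excluded_middle_informative (x = A) then true else false.
have fE x : f x <-> x = A by rewrite /f; case: excluded_middle_informative.
case: (pops_equiv_rev (pops_mirrored f Hmir)) => [E|E] _; [left|right] => i /fE Hi; apply/fE.
  by rewrite -[f _]/((f \o s') i) (codom_ord_inj E).
move: E; rewrite -codom_rev_ord => /codom_ord_inj /(_ (rev_ord i)) /=.
by rewrite /rev_seq rev_ordK => ->.
Qed.
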